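(* For every integer $a\geq 2$, $$\sum_{n\geq 1}\frac{H_n}{(2n+1)^{2a-1}}=-2\lambda(2a-1)\ln 2+\Big(a-\frac12\Big)\lambda(2a)-\sum_{q=1}^{a-2}\lambda(2q+1)\lambda(2a-2q-1),$$ where an empty sum equals $0$.
   Context: $H_n=1+\frac12+\cdots+\frac1n$ is the $n$-th harmonic number. For real $s>1$, $\lambda(s)=\sum_{n\geq 1}\frac{1}{(2n-1)^s}=(1-2^{-s})\zeta(s)$. *)

From Stdlib Require Import Reals Lra Lia List.
From Coquelicot Require Import Coquelicot.
Open Scope R_scope.

Fixpoint harmonic (n : nat) : R :=
  match n with
  | O => 0
  | S m => harmonic m + / INR (S m)
  end.

Definition dlambda (s : nat) : R :=
  Series (fun k : nat => / (INR (2 * k + 1)) ^ s).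

Definition sum_range (m len : nat) (f : nat -> R) : R :=
  fold_right Rplus 0 (map f (seq m len)).

From Stdlib Require Import Reals Lra Lia.
From Coquelicot Require Import Coquelicot.
Open Scope R_scope.

(* Write a = m + 2 and x_i = 2 i + 1.  For i <> j, partial fractions give
     sum_(q=1..m) x_i^-(2q+1) x_j^-(2m+3-2q) = K(i,j) + K(j,i),
     K(i,j) = x_i^-(2m+3) (-1/x_j + 1/(4(j-i)) + 1/(4(i+j+1))),
   while the diagonal i = j contributes m x_i^-(2m+4).  Summed over j <= J (j <> i), the three
   partial fractions telescope into harmonic numbers, -H_i/2 + 3/(4 x_i) + e_J(i), where
   e_J(i) -> -ln 2.  So the truncated convolution sum_q lambda_J(2q+1) lambda_J(2m+3-2q) equals
   m lambda_J(2m+4) - S_J + (3/2) lambda_J(2m+4) + 2 sum_(i<=J) x_i^-(2m+3) e_J(i), with S_J the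
   truncated target series; letting J -> oo (by Tannery's theorem for the e_J term) gives the
   identity. *)

Lemma ln_le_sub_1 y : 0 < y -> ln y <= y - 1.
Proof. intros Hy. pose proof (exp_ineq1_le (ln y)) as H. rewrite exp_ln in H; lra. Qed.

Lemma harmonic_S n : harmonic (S n) = harmonic n + / INR (S n).
Proof. reflexivity. Qed.

Lemma harmonic_le_add n c : harmonic n <= harmonic (n + c).
Proof.
  induction c as [|c IH]; [rewrite Nat.add_0_r; lra|].
  rewrite Nat.add_succ_r, harmonic_S.
  assert (0 < / INR (S (n + c))) by (apply Rinv_0_lt_compat, lt_0_INR; lia).
  lra.
Qed.

Lemma harmonic_le_INR n : harmonic n <= INR n.
Proof.
  induction n as [|n IH]; [simpl; lra|].
  assert (/ INR (S n) <= 1).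
  { rewrite <- Rinv_1. apply Rinv_le_contravar; [lra|]. apply (le_INR 1); lia. }
  rewrite harmonic_S, S_INR. rewrite S_INR in H. lra.
Qed.

Lemma harmonic_add_sub_le n c : harmonic (n + c) - harmonic n <= harmonic c.
Proof.
  induction c as [|c IH]; [rewrite Nat.add_0_r; simpl; lra|].
  rewrite Nat.add_succ_r, !harmonic_S.
  assert (/ INR (S (n + c)) <= / INR (S c)).
  { apply Rinv_le_contravar; [apply lt_0_INR; lia | apply le_INR; lia]. }
  lra.
Qed.

Lemma harmonic_add_sub_le_div n c :
  harmonic (n + c) - harmonic n <= INR c / (INR n + 1).
Proof.
  induction c as [|c IH]; [rewrite Nat.add_0_r; simpl; unfold Rdiv; lra|].
  rewrite Nat.add_succ_r, harmonic_S.
  assert (/ INR (S (n + c)) <= / (INR n + 1)).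
  { apply Rinv_le_contravar; [pose proof (pos_INR n); lra|].
    rewrite <- S_INR. apply le_INR; lia. }
  rewrite (S_INR c). unfold Rdiv in *. rewrite Rmult_plus_distr_r, Rmult_1_l. lra.
Qed.

Lemma harmonic_add_sub_le_ln n c : (1 <= n)%nat ->
  harmonic (n + c) - harmonic n <= ln (INR (n + c)) - ln (INR n).
Proof.
  intros Hn. induction c as [|c IH]; [rewrite Nat.add_0_r; lra|].
  rewrite Nat.add_succ_r, harmonic_S.
  assert (/ INR (S (n + c)) <= ln (INR (S (n + c))) - ln (INR (n + c))).
  { rewrite S_INR. set (k := INR (n + c)).
    assert (Hk : 1 <= k) by (apply (le_INR 1); lia).
    pose proof (ln_le_sub_1 (k / (k + 1)) ltac:(apply Rdiv_lt_0_compat; lra)) as H.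
    rewrite ln_div in H by lra.
    replace (k / (k + 1) - 1) with (- / (k + 1)) in H by (field; lra). lra. }
  lra.
Qed.

Lemma ln_le_harmonic_add_sub n c :
  ln (INR (n + c + 1)) - ln (INR (n + 1)) <= harmonic (n + c) - harmonic n.
Proof.
  induction c as [|c IH]; [rewrite Nat.add_0_r; lra|].
  replace (n + S c + 1)%nat with (S (S (n + c))) by lia.
  replace (n + c + 1)%nat with (S (n + c)) in IH by lia.
  replace (n + S c)%nat with (S (n + c)) by lia. rewrite harmonic_S.
  assert (ln (INR (S (S (n + c)))) - ln (INR (S (n + c))) <= / INR (S (n + c))).
  { rewrite !S_INR. set (k := INR (n + c)). assert (0 <= k) by apply pos_INR.
    pose proof (ln_le_sub_1 ((k + 1 + 1) / (k + 1)) ltac:(apply Rdiv_lt_0_compat; lra)) as Hln.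
    rewrite ln_div in Hln by lra.
    replace ((k + 1 + 1) / (k + 1) - 1) with (/ (k + 1)) in Hln by (field; lra). lra. }
  lra.
Qed.

Lemma harmonic_double_sub_ln2 n :
  Rabs (harmonic (n + n) - harmonic n - ln 2) <= / (INR n + 1).
Proof.
  destruct n as [|n].
  { simpl. rewrite Rplus_0_l, Rinv_1.
    pose proof (ln_le_sub_1 2 ltac:(lra)). pose proof ln_lt_2. rewrite Rabs_left1; lra. }
  pose proof (harmonic_add_sub_le_ln (S n) (S n) ltac:(lia)) as Hup.
  pose proof (ln_le_harmonic_add_sub (S n) (S n)) as Hlow.
  rewrite !plus_INR in Hup. rewrite !plus_INR in Hlow. change (INR 1) with 1 in Hlow.
  assert (HN : 1 <= INR (S n)) by (apply (le_INR 1); lia).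
  set (x := INR (S n)) in *.
  replace (x + x) with (2 * x) in Hup by ring. rewrite ln_mult in Hup by lra.
  assert (ln (x + x + 1) - ln (x + 1) - ln 2 >= - / (x + 1)).
  { replace (x + x + 1) with (2 * (x + 1) / ((2 * x + 2) / (2 * x + 1))) by (field; lra).
    rewrite ln_div, ln_mult by (try apply Rdiv_lt_0_compat; try apply Rmult_lt_0_compat; lra).
    pose proof (ln_le_sub_1 ((2 * x + 2) / (2 * x + 1)) ltac:(apply Rdiv_lt_0_compat; lra)) as Hln.
    replace ((2 * x + 2) / (2 * x + 1) - 1) with (/ (2 * x + 1)) in Hln by (field; lra).
    assert (/ (2 * x + 1) <= / (x + 1)) by (apply Rinv_le_contravar; lra).
    lra. }
  unfold Rabs; destruct Rcase_abs; lra.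
Qed.

Lemma sum_range_S c n f : sum_range c (S n) f = f c + sum_range (S c) n f.
Proof. reflexivity. Qed.

Lemma sum_range_Sr c n f : sum_range c (S n) f = sum_range c n f + f (c + n)%nat.
Proof.
  revert c. induction n as [|n IH]; intros c.
  - rewrite Nat.add_0_r. unfold sum_range; simpl; ring.
  - rewrite sum_range_S, IH, sum_range_S, Nat.add_succ_comm. ring.
Qed.

Lemma sum_range_ext_in c n f g : (forall q, (c <= q < c + n)%nat -> f q = g q) ->
  sum_range c n f = sum_range c n g.
Proof.
  revert c. induction n as [|n IH]; intros c H; [reflexivity|].
  rewrite !sum_range_S, (H c), (IH (S c)); [reflexivity | intros; apply H | ]; lia.
Qed.

Lemma sum_range_plus c n f g :
  sum_range c n (fun q => f q + g q) = sum_range c n f + sum_range c n g.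
Proof.
  revert c. induction n as [|n IH]; intros c; [unfold sum_range; simpl; ring|].
  rewrite !sum_range_S, IH. ring.
Qed.

Lemma sum_range_scal_l c n k f :
  sum_range c n (fun q => k * f q) = k * sum_range c n f.
Proof.
  revert c. induction n as [|n IH]; intros c; [unfold sum_range; simpl; ring|].
  rewrite !sum_range_S, IH. ring.
Qed.

Lemma sum_range_const c n k : sum_range c n (fun _ => k) = INR n * k.
Proof.
  revert c. induction n as [|n IH]; intros c; [unfold sum_range; simpl; ring|].
  rewrite sum_range_S, IH, S_INR. ring.
Qed.

Lemma sum_n_sum_range (f : nat -> R) J : sum_n f J = sum_range 0 (S J) f.
Proof.
  induction J as [|J IH]; [rewrite sum_O; unfold sum_range; simpl; ring|].
  rewrite sum_Sn, sum_range_Sr, <- IH. reflexivity.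
Qed.

Lemma sum_n_Sl (u : nat -> R) J : sum_n u (S J) = u 0%nat + sum_n (fun k => u (S k)) J :> R.
Proof.
  induction J as [|J IH].
  - rewrite sum_Sn, !sum_O. reflexivity.
  - rewrite sum_Sn, IH, sum_Sn. change plus with Rplus. ring.
Qed.

Lemma sum_n_Rplus (u v : nat -> R) n : sum_n (fun k => u k + v k) n = sum_n u n + sum_n v n.
Proof. exact (sum_n_plus u v n). Qed.

Lemma sum_n_Rminus (u v : nat -> R) n :
  sum_n (fun k => u k - v k) n = sum_n u n - sum_n v n :> R.
Proof.
  induction n as [|n IH]; [rewrite !sum_O; reflexivity|].
  rewrite !sum_Sn, IH. change plus with Rplus. ring.
Qed.

Lemma sum_n_Rmult_l (a : R) (u : nat -> R) n : sum_n (fun k => a * u k) n = a * sum_n u n.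
Proof. exact (sum_n_mult_l a u n). Qed.

Lemma sum_range_sum_n c n (F : nat -> nat -> R) J :
  sum_range c n (fun q => sum_n (F q) J) = sum_n (fun i => sum_range c n (fun q => F q i)) J.
Proof.
  revert c. induction n as [|n IH]; intros c.
  - unfold sum_range; simpl. rewrite sum_n_const. ring.
  - rewrite sum_range_S, IH, <- sum_n_Rplus. reflexivity.
Qed.

Lemma is_lim_seq_sum_range c n (u : nat -> nat -> R) (l : nat -> R) :
  (forall q, (c <= q < c + n)%nat -> is_lim_seq (u q) (l q)) ->
  is_lim_seq (fun J => sum_range c n (fun q => u q J)) (sum_range c n l).
Proof.
  revert c. induction n as [|n IH]; intros c H; [apply is_lim_seq_const|].
  apply is_lim_seq_plus'; [apply H; lia | apply IH; intros; apply H; lia].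
Qed.

Lemma is_lim_seq_sum_n (u : nat -> nat -> R) (l : nat -> R) N :
  (forall i, is_lim_seq (fun J => u J i) (l i)) ->
  is_lim_seq (fun J => sum_n (u J) N) (sum_n l N).
Proof.
  intros H. induction N as [|N IH].
  - rewrite sum_O.
    apply (is_lim_seq_ext (fun J => u J 0%nat)); [intros; now rewrite sum_O | apply H].
  - rewrite sum_Sn. apply (is_lim_seq_ext (fun J => sum_n (u J) N + u J (S N))).
    + intros; now rewrite sum_Sn.
    + apply is_lim_seq_plus'; auto.
Qed.

Lemma is_lim_seq_inv_succ : is_lim_seq (fun n => / (INR n + 1)) 0.
Proof.
  assert (H : is_lim_seq (fun n => INR n + 1) p_infty).
  { eapply is_lim_seq_plus; [apply is_lim_seq_INR | apply is_lim_seq_const | reflexivity]. }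
  apply is_lim_seq_inv in H; [exact H | discriminate].
Qed.

Lemma is_lim_seq_le_div_succ (u : nat -> R) C :
  (forall n, Rabs (u n) <= C / (INR n + 1)) -> is_lim_seq u 0.
Proof.
  intros H.
  assert (Hlim : forall K, is_lim_seq (fun n => K / (INR n + 1)) 0).
  { intros K. replace (Finite 0) with (Rbar_mult K 0) by (simpl; f_equal; ring).
    apply is_lim_seq_scal_l, is_lim_seq_inv_succ. }
  apply (is_lim_seq_le_le (fun n => - C / (INR n + 1)) u (fun n => C / (INR n + 1)));
    [| apply Hlim | apply Hlim].
  intros n. specialize (H n). apply Rabs_le_between in H. unfold Rdiv in *. lra.
Qed.

Lemma sum_n_le_Series (g : nat -> R) J :
  (forall i, 0 <= g i) -> ex_series g -> sum_n g J <= Series g.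
Proof.
  intros Hg He.
  refine (is_lim_seq_le (fun _ => sum_n g J) (fun n => sum_n g (n + J))
            (sum_n g J) (Series g) _ _ _);
    [| apply is_lim_seq_const | apply (is_lim_seq_incr_n (sum_n g) J), Series_correct, He].
  intros n. induction n as [|n IH]; [apply Rle_refl|].
  rewrite Nat.add_succ_l, sum_Sn. change plus with Rplus. specialize (Hg (S (n + J))). lra.
Qed.

Definition lambda_term (s i : nat) : R := / INR (2 * i + 1) ^ s.

Definition lambda_partial (s J : nat) : R := sum_n (lambda_term s) J.

Lemma INR_odd i : INR (2 * i + 1) = 2 * INR i + 1.
Proof. rewrite plus_INR, mult_INR. simpl. ring. Qed.

Lemma INR_odd_ge1 i : 1 <= INR (2 * i + 1).
Proof. rewrite INR_odd. pose proof (pos_INR i). lra. Qed.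

Lemma lambda_term_pos s i : 0 < lambda_term s i.
Proof. apply Rinv_0_lt_compat, pow_lt. pose proof (INR_odd_ge1 i). lra. Qed.

Lemma lambda_term_le s t i : (s <= t)%nat -> lambda_term t i <= lambda_term s i.
Proof.
  intros Hst. apply Rinv_le_contravar.
  - apply pow_lt. pose proof (INR_odd_ge1 i). lra.
  - apply Rle_pow; [apply INR_odd_ge1 | exact Hst].
Qed.

Lemma lambda_term_S s i : lambda_term (S s) i * INR (2 * i + 1) = lambda_term s i.
Proof.
  unfold lambda_term. pose proof (INR_odd_ge1 i).
  assert (INR (2 * i + 1) ^ s <> 0) by (apply pow_nonzero; lra).
  rewrite <- tech_pow_Rmult. field. split; lra.
Qed.

Lemma sum_n_inv_succ_telescope N :
  sum_n (fun n => 2 * (/ (INR n + 1) - / (INR n + 2))) N = 2 * (1 - / (INR (S N) + 1)).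
Proof.
  induction N as [|N IH].
  - rewrite sum_O. simpl. match goal with |- ?a = ?b => change (@eq R a b) end. field.
  - rewrite sum_Sn, IH. change plus with Rplus. rewrite !S_INR.
    pose proof (pos_INR N). match goal with |- ?a = ?b => change (@eq R a b) end. field. lra.
Qed.

(* [1/(2n+1)^2 <= 1/((n+1)(n+2)/2)], which telescopes. *)
Lemma ex_series_lambda_term s : (2 <= s)%nat -> ex_series (lambda_term s).
Proof.
  intros Hs.
  apply (ex_series_le (K := R_AbsRing) (V := R_CompleteNormedModule)
           _ (fun n => 2 * (/ (INR n + 1) - / (INR n + 2)))).
  - intros n. change norm with Rabs.
    rewrite Rabs_pos_eq by apply Rlt_le, lambda_term_pos.
    eapply Rle_trans; [apply lambda_term_le, Hs|].
    unfold lambda_term. rewrite INR_odd. pose proof (pos_INR n). set (x := INR n) in *.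
    replace (2 * (/ (x + 1) - / (x + 2))) with (/ ((x + 1) * (x + 2) / 2)) by (field; lra).
    apply Rinv_le_contravar; [apply Rdiv_lt_0_compat; nra | simpl; nra].
  - exists 2.
    change (is_lim_seq (sum_n (fun n => 2 * (/ (INR n + 1) - / (INR n + 2)))) 2).
    apply (is_lim_seq_ext (fun N => 2 * (1 - / (INR (S N) + 1)))).
    + intros N. symmetry. apply sum_n_inv_succ_telescope.
    + replace (Finite 2) with (Rbar_mult 2 (1 - 0)) by (simpl; f_equal; ring).
      apply is_lim_seq_scal_l, is_lim_seq_minus'; [apply is_lim_seq_const|].
      apply (is_lim_seq_incr_1 (fun n => / (INR n + 1))), is_lim_seq_inv_succ.
Qed.

Lemma is_lim_lambda_partial s : (2 <= s)%nat -> is_lim_seq (lambda_partial s) (dlambda s).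
Proof. intros Hs. exact (Series_correct _ (ex_series_lambda_term s Hs)). Qed.

Lemma sum_range_inv_pow_split (X Y : R) m :
  X <> 0 -> Y <> 0 -> X * X <> Y * Y ->
  sum_range 1 m (fun q => / X ^ (2 * q + 1) * / Y ^ (2 * m + 3 - 2 * q))
  = / X ^ (2 * m + 3) * (X * X / (Y * (Y * Y - X * X)))
    + / Y ^ (2 * m + 3) * (Y * Y / (X * (X * X - Y * Y))).
Proof.
  intros HX HY HXY.
  assert (HYX : Y * Y - X * X <> 0) by lra.
  assert (HXY' : X * X - Y * Y <> 0) by lra.
  induction m as [|m IH].
  - unfold sum_range. simpl. field. tauto.
  - rewrite sum_range_Sr.
    rewrite (sum_range_ext_in _ _ _
               (fun q => / (Y * Y) * (/ X ^ (2 * q + 1) * / Y ^ (2 * m + 3 - 2 * q)))).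
    2:{ intros q Hq. replace (2 * S m + 3 - 2 * q)%nat with ((2 * m + 3 - 2 * q) + 2)%nat by lia.
        rewrite (pow_add Y). simpl (Y ^ 2). rewrite Rmult_1_r.
        assert (Y ^ (2 * m + 3 - 2 * q) <> 0) by (apply pow_nonzero; auto).
        assert (X ^ (2 * q + 1) <> 0) by (apply pow_nonzero; auto).
        field. tauto. }
    rewrite sum_range_scal_l, IH.
    replace (2 * (1 + m) + 1)%nat with (2 * m + 3)%nat by lia.
    replace (2 * S m + 3 - 2 * (1 + m))%nat with 3%nat by lia.
    replace (2 * S m + 3)%nat with (2 * m + 3 + 2)%nat by lia.
    rewrite !(pow_add _ (2 * m + 3) 2).
    assert (X ^ (2 * m + 3) <> 0) by (apply pow_nonzero; auto).
    assert (Y ^ (2 * m + 3) <> 0) by (apply pow_nonzero; auto).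
    field. tauto.
Qed.

Lemma sum_range_inv_pow_diag (X : R) m : X <> 0 ->
  sum_range 1 m (fun q => / X ^ (2 * q + 1) * / X ^ (2 * m + 3 - 2 * q))
  = INR m * / X ^ (2 * m + 4).
Proof.
  intros HX. rewrite <- sum_range_const with (c := 1%nat).
  apply sum_range_ext_in. intros q Hq.
  rewrite <- Rinv_mult, <- pow_add. do 2 f_equal. lia.
Qed.

Definition pf_kernel (i j : nat) : R :=
  - / INR (2 * j + 1) + / (4 * (INR j - INR i)) + / (4 * (INR i + INR j + 1)).

Lemma pf_kernel_eq i j : i <> j ->
  let X := INR (2 * i + 1) in let Y := INR (2 * j + 1) in
  pf_kernel i j = X * X / (Y * (Y * Y - X * X)).
Proof.
  intros Hij X Y. unfold pf_kernel. fold Y.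
  assert (HXY : INR i <> INR j) by (intros E; apply Hij, INR_eq, E).
  unfold X, Y. rewrite !INR_odd. pose proof (pos_INR i). pose proof (pos_INR j).
  field. repeat split; try lra; nra.
Qed.

Definition conv_partial (m J : nat) : R :=
  sum_range 1 m (fun q => lambda_partial (2 * q + 1) J * lambda_partial (2 * m + 3 - 2 * q) J).

Definition weighted_kernel (m i j : nat) : R :=
  if Nat.eq_dec i j then 0 else lambda_term (2 * m + 3) i * pf_kernel i j.

Lemma sum_range_lambda_term_mul m i j :
  sum_range 1 m (fun q => lambda_term (2 * q + 1) i * lambda_term (2 * m + 3 - 2 * q) j)
  = (if Nat.eq_dec i j then INR m * lambda_term (2 * m + 4) i else 0)
    + (weighted_kernel m i j + weighted_kernel m j i).
Proof.
  unfold weighted_kernel, lambda_term.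
  pose proof (INR_odd_ge1 i). pose proof (INR_odd_ge1 j).
  destruct (Nat.eq_dec i j) as [<-|Hij].
  - destruct (Nat.eq_dec i i) as [_|]; [|congruence].
    rewrite sum_range_inv_pow_diag by lra. ring.
  - destruct (Nat.eq_dec j i) as [E|_]; [congruence|].
    assert (INR (2 * i + 1) <> INR (2 * j + 1)) by (intros E; apply Hij; apply INR_eq in E; lia).
    rewrite sum_range_inv_pow_split, !pf_kernel_eq by (auto; nra). ring.
Qed.

Lemma sum_n_indicator (c : R) i J : (i <= J)%nat ->
  sum_n (fun j => if Nat.eq_dec i j then c else 0) J = c.
Proof.
  intros HiJ.
  assert (H : forall J, sum_n (fun j => if Nat.eq_dec i j then c else 0) J
                        = (if Compare_dec.le_lt_dec i J then c else 0) :> R).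
  { induction J0 as [|J0 IH].
    - rewrite sum_O. destruct (Nat.eq_dec i 0), (Compare_dec.le_lt_dec i 0); try reflexivity; lia.
    - rewrite sum_Sn, IH. change plus with Rplus.
      destruct (Nat.eq_dec i (S J0)), (Compare_dec.le_lt_dec i J0),
        (Compare_dec.le_lt_dec i (S J0));
        try lia; ring. }
  rewrite H. destruct (Compare_dec.le_lt_dec i J); [reflexivity | lia].
Qed.

Lemma lambda_partial_mul p r J :
  lambda_partial p J * lambda_partial r J
  = sum_n (fun i => sum_n (fun j => lambda_term p i * lambda_term r j) J) J.
Proof.
  unfold lambda_partial. rewrite <- (sum_n_mult_r (K := R_Ring)). apply sum_n_ext. intros i.
  rewrite <- (sum_n_mult_l (K := R_Ring)). reflexivity.
Qed.

(* Both off-diagonal kernels contribute equally to the symmetric double sum. *)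
Lemma conv_partial_expand m J :
  conv_partial m J
  = INR m * lambda_partial (2 * m + 4) J + 2 * sum_n (fun i => sum_n (weighted_kernel m i) J) J.
Proof.
  unfold conv_partial.
  rewrite (sum_range_ext_in _ _ _ (fun q => sum_n (fun i => sum_n (fun j =>
             lambda_term (2 * q + 1) i * lambda_term (2 * m + 3 - 2 * q) j) J) J))
    by (intros; apply lambda_partial_mul).
  rewrite sum_range_sum_n.
  erewrite sum_n_ext; [| intros i; rewrite sum_range_sum_n; apply sum_n_ext; intros j;
                         apply sum_range_lambda_term_mul].
  rewrite (sum_n_ext _ (fun i =>
             sum_n (fun j => if Nat.eq_dec i j then INR m * lambda_term (2 * m + 4) i else 0) J
             + (sum_n (weighted_kernel m i) J + sum_n (fun j => weighted_kernel m j i) J)))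
    by (intros i; rewrite <- !sum_n_Rplus; reflexivity).
  rewrite !sum_n_Rplus, (sum_n_switch (G := R_AbelianMonoid) (fun i j => weighted_kernel m j i)).
  rewrite (sum_n_ext_loc _ (fun i => INR m * lambda_term (2 * m + 4) i))
    by (intros i Hi; apply sum_n_indicator, Hi).
  rewrite sum_n_Rmult_l. unfold lambda_partial.
  change (sum_n (fun j => sum_n (fun i => weighted_kernel m j i) J) J)
    with (sum_n (fun i => sum_n (weighted_kernel m i) J) J).
  ring.
Qed.

Definition pf_row_sum (i J : nat) : R :=
  sum_n (fun j => if Nat.eq_dec i j then 0 else pf_kernel i j) J.

(* The e_J(i) of the proof; only meaningful for [i <= J], as [J - i] truncates. *)
Definition harmonic_defect (J i : nat) : R :=
  (harmonic (J - i) + harmonic (J + i + 1)) / 4 + harmonic (J + 1) / 2 - harmonic (2 * J + 2).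

Lemma sum_range_inv_sub c n :
  sum_range c n (fun j => / (INR j - INR (c + n))) = - harmonic n.
Proof.
  revert c. induction n as [|n IH]; intros c; [unfold sum_range; simpl; ring|].
  rewrite sum_range_S, <- Nat.add_succ_comm, IH, harmonic_S, plus_INR, !S_INR.
  pose proof (pos_INR n). field. lra.
Qed.

Lemma sum_range_inv_add c n :
  sum_range 0 n (fun j => / (INR c + INR j + 1)) = harmonic (c + n) - harmonic c.
Proof.
  induction n as [|n IH]; [rewrite Nat.add_0_r; unfold sum_range; simpl; ring|].
  rewrite sum_range_Sr, IH, Nat.add_0_l, Nat.add_succ_r, harmonic_S, S_INR, plus_INR. ring.
Qed.

Lemma sum_range_inv_odd n :
  sum_range 0 n (fun j => / INR (2 * j + 1)) = harmonic (2 * n) - harmonic n / 2.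
Proof.
  induction n as [|n IH]; [unfold sum_range; simpl; field|].
  rewrite sum_range_Sr, IH. simpl (0 + n)%nat.
  replace (2 * S n)%nat with (S (S (2 * n))) by lia.
  replace (2 * n + 1)%nat with (S (2 * n)) by lia.
  rewrite !harmonic_S, !S_INR, mult_INR. change (INR 2) with 2.
  pose proof (pos_INR n). field. lra.
Qed.

Lemma pf_row_sum_diag i : pf_row_sum i i = - 3 * harmonic (2 * i) / 4.
Proof.
  unfold pf_row_sum. rewrite sum_n_sum_range, sum_range_Sr. simpl (0 + i)%nat.
  destruct (Nat.eq_dec i i) as [_|]; [|congruence].
  rewrite (sum_range_ext_in _ _ _ (fun j => (-1) * / INR (2 * j + 1)
             + / 4 * / (INR j - INR (0 + i)) + / 4 * / (INR i + INR j + 1))).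
  2:{ intros j Hj. destruct (Nat.eq_dec i j); [lia|].
      unfold pf_kernel. rewrite Nat.add_0_l, !Rinv_mult. ring. }
  rewrite !sum_range_plus, !sum_range_scal_l, sum_range_inv_odd, sum_range_inv_sub,
    sum_range_inv_add.
  replace (i + i)%nat with (2 * i)%nat by lia. field.
Qed.

Lemma pf_row_sum_eq i d :
  pf_row_sum i (i + d)
  = - harmonic i / 2 + 3 / (4 * INR (2 * i + 1)) + harmonic_defect (i + d) i.
Proof.
  induction d as [|d IH].
  - rewrite Nat.add_0_r, pf_row_sum_diag. unfold harmonic_defect. rewrite Nat.sub_diag.
    replace (i + i + 1)%nat with (S (2 * i)) by lia.
    replace (2 * i + 2)%nat with (S (S (2 * i))) by lia.
    replace (i + 1)%nat with (S i) by lia.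
    replace (2 * i + 1)%nat with (S (2 * i)) by lia.
    rewrite !harmonic_S, !S_INR, mult_INR. change (INR 2) with 2. simpl (harmonic 0).
    pose proof (pos_INR i). field. lra.
  - replace (i + S d)%nat with (S (i + d)) by lia.
    unfold pf_row_sum. rewrite sum_Sn. fold (pf_row_sum i (i + d)). rewrite IH.
    destruct (Nat.eq_dec i (S (i + d))) as [E|_]; [lia|].
    change plus with Rplus. unfold harmonic_defect, pf_kernel.
    replace (S (i + d) - i)%nat with (S d) by lia.
    replace (i + d - i)%nat with d by lia.
    replace (S (i + d) + i + 1)%nat with (S (i + d + i + 1)) by lia.
    replace (S (i + d) + 1)%nat with (S (i + d + 1)) by lia.
    replace (2 * S (i + d) + 2)%nat with (S (S (2 * (i + d) + 2))) by lia.
    replace (2 * S (i + d) + 1)%nat with (S (2 * (i + d) + 2)) by lia.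
    rewrite !harmonic_S, !S_INR, !plus_INR, !mult_INR, !S_INR, !plus_INR, INR_0.
    pose proof (pos_INR i). pose proof (pos_INR d).
    field. repeat split; lra.
Qed.

Definition weighted_harmonic_partial (m J : nat) : R :=
  sum_n (fun i => lambda_term (2 * m + 3) i * harmonic i) J.

Lemma sum_n_weighted_kernel m i J : (i <= J)%nat ->
  sum_n (weighted_kernel m i) J
  = (-1/2) * (lambda_term (2 * m + 3) i * harmonic i)
    + (3/4 * lambda_term (2 * m + 4) i + lambda_term (2 * m + 3) i * harmonic_defect J i) :> R.
Proof.
  intros HiJ.
  transitivity (lambda_term (2 * m + 3) i * pf_row_sum i J).
  { unfold pf_row_sum. rewrite <- (sum_n_mult_l (K := R_Ring)). apply sum_n_ext. intros j.
    unfold weighted_kernel. destruct (Nat.eq_dec i j); [symmetry; apply Rmult_0_r | reflexivity]. }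
  replace J with (i + (J - i))%nat by lia. rewrite pf_row_sum_eq.
  replace (i + (J - i))%nat with J by lia.
  rewrite <- (lambda_term_S (2 * m + 3) i). replace (S (2 * m + 3)) with (2 * m + 4)%nat by lia.
  pose proof (INR_odd_ge1 i). field. lra.
Qed.

Lemma weighted_harmonic_partial_eq m J :
  weighted_harmonic_partial m J
  = (INR m + 3 / 2) * lambda_partial (2 * m + 4) J
    + 2 * sum_n (fun i => lambda_term (2 * m + 3) i * harmonic_defect J i) J
    - conv_partial m J.
Proof.
  rewrite conv_partial_expand, (sum_n_ext_loc _ _ _ (fun i => sum_n_weighted_kernel m i J)).
  rewrite !sum_n_Rplus, !sum_n_Rmult_l. unfold weighted_harmonic_partial, lambda_partial. lra.
Qed.

Lemma sum_n_m_le_Series_sub (g : nat -> R) N J :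
  (forall i, 0 <= g i) -> ex_series g -> (N <= J)%nat ->
  sum_n_m g (S N) J <= Series g - sum_n g N.
Proof.
  intros Hg He HNJ. rewrite (sum_n_m_sum_n (G := R_AbelianGroup)) by exact HNJ.
  apply Rplus_le_compat_r, (sum_n_le_Series g J Hg He).
Qed.

Lemma is_lim_seq_sum_n_diag_0 (d : nat -> nat -> R) (h : nat -> R) :
  (forall J i, Rabs (d J i) <= h i) -> ex_series h ->
  (forall i, is_lim_seq (fun J => d J i) 0) ->
  is_lim_seq (fun J => sum_n (d J) J) 0.
Proof.
  intros Hd Hh Hlim.
  assert (Hh0 : forall i, 0 <= h i)
    by (intros i; eapply Rle_trans; [apply Rabs_pos | apply (Hd 0%nat)]).
  apply is_lim_seq_spec. intros eps.
  assert (Htail : is_lim_seq (fun N => Series h - sum_n h N) 0).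
  { replace (Finite 0) with (Finite (Series h - Series h)) by (f_equal; ring).
    apply is_lim_seq_minus'; [apply is_lim_seq_const | apply Series_correct, Hh]. }
  apply is_lim_seq_spec in Htail.
  destruct (Htail (pos_div_2 eps)) as [N HN]. specialize (HN N (le_n N)).
  assert (Hhead : is_lim_seq (fun J => sum_n (d J) N) 0).
  { replace (Finite 0) with (Finite (sum_n (fun _ => 0) N))
      by (f_equal; rewrite sum_n_const; simpl; ring).
    apply is_lim_seq_sum_n, Hlim. }
  apply is_lim_seq_spec in Hhead. destruct (Hhead (pos_div_2 eps)) as [N' HN'].
  exists (max N N'). intros J HJ. specialize (HN' J ltac:(lia)).
  rewrite Rminus_0_r in HN, HN' |- *. simpl in HN, HN'.
  assert (Hsplit : sum_n (d J) J = sum_n (d J) N + sum_n_m (d J) (S N) J).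
  { rewrite (sum_n_m_sum_n (G := R_AbelianGroup)) by lia. symmetry. apply Rplus_minus. }
  assert (Hrest : Rabs (sum_n_m (d J) (S N) J) <= Series h - sum_n h N).
  { eapply Rle_trans; [apply (norm_sum_n_m (K := R_AbsRing) (V := R_NormedModule))|].
    eapply Rle_trans; [apply (sum_n_m_le _ h), Hd|].
    apply sum_n_m_le_Series_sub; auto; lia. }
  rewrite Rabs_pos_eq in HN by (pose proof (sum_n_le_Series h N Hh0 Hh); lra).
  rewrite Hsplit. eapply Rle_lt_trans; [apply Rabs_triang|]. lra.
Qed.

(* Tannery's theorem. *)
Lemma is_lim_seq_sum_n_dominated (f : nat -> nat -> R) (L g : nat -> R) :
  (forall J i, Rabs (f J i) <= g i) -> ex_series g ->
  (forall i, is_lim_seq (fun J => f J i) (L i)) ->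
  is_lim_seq (fun J => sum_n (f J) J) (Series L).
Proof.
  intros Hf Hg Hlim.
  assert (HL : forall i, Rabs (L i) <= g i).
  { intros i. apply (is_lim_seq_le (fun J => Rabs (f J i)) (fun _ => g i) (Rabs (L i)) (g i)).
    - intros J. apply Hf.
    - apply (is_lim_seq_abs _ (L i)), Hlim.
    - apply is_lim_seq_const. }
  assert (HeL : ex_series L).
  { apply (ex_series_le (K := R_AbsRing) (V := R_CompleteNormedModule) _ g); auto. }
  apply (is_lim_seq_ext (fun J => sum_n (fun i => f J i - L i) J + sum_n L J)).
  { intros J. rewrite sum_n_Rminus. lra. }
  replace (Series L) with (0 + Series L) by ring.
  apply is_lim_seq_plus'; [| apply Series_correct, HeL].
  apply (is_lim_seq_sum_n_diag_0 _ (fun i => 2 * g i)).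
  - intros J i. unfold Rminus. eapply Rle_trans; [apply Rabs_triang|].
    rewrite Rabs_Ropp. specialize (Hf J i). specialize (HL i). lra.
  - apply (ex_series_scal_l (V := R_NormedModule) 2 g Hg).
  - intros i. replace (Finite 0) with (Finite (L i - L i)) by (f_equal; ring).
    apply is_lim_seq_minus'; [apply Hlim | apply is_lim_seq_const].
Qed.

Lemma harmonic_defect_le J i : (i <= J)%nat -> Rabs (harmonic_defect J i) <= harmonic i / 4 + 2.
Proof.
  intros HiJ. unfold harmonic_defect.
  pose proof (harmonic_add_sub_le (J - i) i) as H1.
  pose proof (harmonic_le_add (J - i) i) as H1'.
  replace (J - i + i)%nat with J in H1, H1' by lia.
  pose proof (harmonic_le_add J (i + 1)) as H2.
  pose proof (harmonic_le_add (J + i + 1) (J - i + 1)) as H2'.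
  pose proof (harmonic_le_add J 1) as H3.
  pose proof (harmonic_le_add (J + 1) (J + 1)) as H3'.
  pose proof (harmonic_add_sub_le_div J (J + 2)) as H4.
  replace (J + (i + 1))%nat with (J + i + 1)%nat in H2 by lia.
  replace (J + i + 1 + (J - i + 1))%nat with (2 * J + 2)%nat in H2' by lia.
  replace (J + 1 + (J + 1))%nat with (2 * J + 2)%nat in H3' by lia.
  replace (J + (J + 2))%nat with (2 * J + 2)%nat in H4 by lia.
  assert (INR (J + 2) / (INR J + 1) <= 2).
  { rewrite plus_INR. pose proof (pos_INR J). apply Rmult_le_reg_r with (INR J + 1); [lra|].
    unfold Rdiv. rewrite Rmult_assoc, Rinv_l by lra. simpl. lra. }
  apply Rabs_le. lra.
Qed.

(* Each harmonic number in [harmonic_defect (n + i) i] is within [O(i / n)] of [harmonic (n + i)]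
   or [harmonic (2 * (n + i))], leaving [harmonic (2 J) - harmonic J - ln 2 = O(1 / J)]. *)
Lemma harmonic_defect_add_ln2_le n i :
  Rabs (harmonic_defect (n + i) i + ln 2) <= (INR i + 4) / (INR n + 1).
Proof.
  set (J := (n + i)%nat). set (t := / (INR n + 1)).
  assert (Ht : 0 < t) by (apply Rinv_0_lt_compat; pose proof (pos_INR n); lra).
  assert (HtJ : / (INR J + 1) <= t).
  { apply Rinv_le_contravar; [pose proof (pos_INR n); lra|].
    unfold J. rewrite plus_INR. pose proof (pos_INR i). lra. }
  assert (HtJ2 : / (INR (2 * J) + 1) <= t).
  { apply Rinv_le_contravar; [pose proof (pos_INR n); lra|].
    unfold J. rewrite mult_INR, plus_INR. pose proof (pos_INR i). pose proof (pos_INR n).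
    change (INR 2) with 2. lra. }
  unfold harmonic_defect. replace (J - i)%nat with n by (unfold J; lia).
  pose proof (harmonic_add_sub_le_div n i) as H1. pose proof (harmonic_le_add n i) as H1'.
  fold J in H1, H1'.
  pose proof (harmonic_add_sub_le_div J (i + 1)) as H2.
  pose proof (harmonic_le_add J (i + 1)) as H2'.
  replace (J + (i + 1))%nat with (J + i + 1)%nat in H2, H2' by lia.
  pose proof (harmonic_add_sub_le_div J 1) as H3. pose proof (harmonic_le_add J 1) as H3'.
  pose proof (harmonic_add_sub_le_div (2 * J) 2) as H4.
  pose proof (harmonic_le_add (2 * J) 2) as H4'.
  pose proof (harmonic_double_sub_ln2 J) as H5. replace (J + J)%nat with (2 * J)%nat in H5 by lia.
  apply Rabs_le_between in H5.
  unfold Rdiv in H1, H2, H3, H4 |- *. fold t in H1 |- *.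
  rewrite plus_INR in H2. change (INR 1) with 1 in H2, H3. change (INR 2) with 2 in H4.
  assert (INR i * / (INR J + 1) <= INR i * t)
    by (apply Rmult_le_compat_l; [apply pos_INR | exact HtJ]).
  pose proof (pos_INR i).
  apply Rabs_le. split; nra.
Qed.

Lemma is_lim_seq_harmonic_defect i : is_lim_seq (fun J => harmonic_defect J i) (- ln 2).
Proof.
  apply (is_lim_seq_incr_n _ i).
  apply (is_lim_seq_ext (fun n => (harmonic_defect (n + i) i + ln 2) + - ln 2)); [intros; ring|].
  replace (Finite (- ln 2)) with (Finite (0 + - ln 2)) by (f_equal; ring).
  apply is_lim_seq_plus'; [| apply is_lim_seq_const].
  apply (is_lim_seq_le_div_succ _ (INR i + 4)). intros n. apply harmonic_defect_add_ln2_le.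
Qed.

Lemma is_lim_seq_defect_partial m :
  is_lim_seq (fun J => sum_n (fun i => lambda_term (2 * m + 3) i * harmonic_defect J i) J)
    (- ln 2 * dlambda (2 * m + 3)).
Proof.
  unfold dlambda. change (fun k => / INR (2 * k + 1) ^ (2 * m + 3)) with (lambda_term (2 * m + 3)).
  rewrite <- Series_scal_l. set (w := lambda_term (2 * m + 3)).
  apply (is_lim_seq_ext (fun J => sum_n (fun i =>
           if Compare_dec.le_dec i J then w i * harmonic_defect J i else 0) J)).
  { intros J. apply sum_n_ext_loc. intros i Hi.
    destruct (Compare_dec.le_dec i J); [reflexivity | lia]. }
  apply (is_lim_seq_sum_n_dominated _ _ (fun i => 2 * lambda_term (2 * m + 2) i)).
  - intros J i. destruct (Compare_dec.le_dec i J) as [HiJ|].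
    + rewrite <- (lambda_term_S (2 * m + 2) i), INR_odd.
      replace (S (2 * m + 2)) with (2 * m + 3)%nat by lia. fold w.
      rewrite Rabs_mult, (Rabs_pos_eq (w i)) by apply Rlt_le, lambda_term_pos.
      assert (Rabs (harmonic_defect J i) <= 2 * (2 * INR i + 1)).
      { pose proof (harmonic_defect_le J i HiJ). pose proof (harmonic_le_INR i).
        pose proof (pos_INR i). lra. }
      pose proof (lambda_term_pos (2 * m + 3) i) as Hw. fold w in Hw. nra.
    + rewrite Rabs_R0. pose proof (lambda_term_pos (2 * m + 2) i). lra.
  - apply (ex_series_scal_l (V := R_NormedModule)), ex_series_lambda_term. lia.
  - intros i. apply (is_lim_seq_ext_loc (fun J => w i * harmonic_defect J i)).
    + exists i. intros J HJ. destruct (Compare_dec.le_dec i J); [reflexivity | lia].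
    + replace (Finite (- ln 2 * w i)) with (Rbar_mult (w i) (- ln 2)) by (simpl; f_equal; ring).
      apply is_lim_seq_scal_l, is_lim_seq_harmonic_defect.
Qed.

Lemma is_lim_weighted_harmonic_partial m :
  is_lim_seq (weighted_harmonic_partial m)
    ((INR m + 3 / 2) * dlambda (2 * m + 4) + 2 * (- ln 2 * dlambda (2 * m + 3))
     - sum_range 1 m (fun q => dlambda (2 * q + 1) * dlambda (2 * m + 3 - 2 * q))).
Proof.
  apply (is_lim_seq_ext _ _ _ (fun J => eq_sym (weighted_harmonic_partial_eq m J))).
  apply is_lim_seq_minus'; [apply is_lim_seq_plus'|].
  - apply is_lim_seq_mult'; [apply is_lim_seq_const | apply is_lim_lambda_partial; lia].
  - apply is_lim_seq_mult'; [apply is_lim_seq_const | apply is_lim_seq_defect_partial].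
  - apply is_lim_seq_sum_range. intros q Hq.
    apply is_lim_seq_mult'; apply is_lim_lambda_partial; lia.
Qed.

Lemma weighted_harmonic_partial_S m J :
  weighted_harmonic_partial m (S J)
  = sum_n (fun k => harmonic (S k) / INR (2 * S k + 1) ^ (2 * m + 3)) J.
Proof.
  unfold weighted_harmonic_partial. rewrite sum_n_Sl. simpl (harmonic 0).
  rewrite Rmult_0_r, Rplus_0_l. apply sum_n_ext. intros k. apply Rmult_comm.
Qed.

Lemma is_series_of_is_lim_seq (a : nat -> R) (l : R) :
  is_lim_seq (sum_n a) l -> is_series a l.
Proof. exact (fun H => H). Qed.

Theorem mainTheorem3 (a : nat) (ha : (2 <= a)%nat) :
  is_series (fun k : nat => harmonic (S k) / (INR (2 * (S k) + 1)) ^ (2 * a - 1))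
    (- 2 * dlambda (2 * a - 1) * ln 2
     + (INR a - 1 / 2) * dlambda (2 * a)
     - sum_range 1 (a - 2)
         (fun q => dlambda (2 * q + 1) * dlambda (2 * a - 2 * q - 1))).
Proof.
  destruct (Nat.le_exists_sub 2 a ha) as [m [-> _]].
  replace (2 * (m + 2) - 1)%nat with (2 * m + 3)%nat by lia.
  replace (2 * (m + 2))%nat with (2 * m + 4)%nat by lia.
  replace (m + 2 - 2)%nat with m by lia.
  rewrite (sum_range_ext_in 1 m _ (fun q => dlambda (2 * q + 1) * dlambda (2 * m + 3 - 2 * q)))
    by (intros q Hq; do 2 f_equal; lia).
  replace (- 2 * dlambda (2 * m + 3) * ln 2 + (INR (m + 2) - 1 / 2) * dlambda (2 * m + 4))
    with ((INR m + 3 / 2) * dlambda (2 * m + 4) + 2 * (- ln 2 * dlambda (2 * m + 3)))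
    by (rewrite plus_INR; simpl; field).
  apply is_series_of_is_lim_seq, (is_lim_seq_ext (fun J => weighted_harmonic_partial m (S J))).
  { apply weighted_harmonic_partial_S. }
  apply (is_lim_seq_incr_1 (weighted_harmonic_partial m)), is_lim_weighted_harmonic_partial.
Qed.
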